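(* Let $\tau=\frac{1+\sqrt5}{2}$, $\sigma=\frac{1-\sqrt5}{2}$, let $l_1,\dots,l_6$ be the standard orthonormal basis of $\mathbb{R}^6$, and let $D_6=\{\sum_{i=1}^6 m_i l_i : m_i\in\mathbb{Z},\ \sum_i m_i \text{ even}\}$. Let $\pi_\parallel:\mathbb{R}^6\to\mathbb{R}^3$ be the linear map with, writing $s=\sqrt{2(2+\tau)}$, $$\pi_\parallel(l_1)=\tfrac1s(1,\tau,0),\ \pi_\parallel(l_2)=\tfrac1s(-1,\tau,0),\ \pi_\parallel(l_3)=\tfrac1s(0,1,\tau),\ \pi_\parallel(l_4)=\tfrac1s(0,1,-\tau),\ \pi_\parallel(l_5)=\tfrac1s(\tau,0,1),\ \pi_\parallel(l_6)=\tfrac1s(-\tau,0,1).$$ Let $H_3\subset O(3)$ be the group generated by $$R_1=\begin{bmatrix}-1&0&0\\0&1&0\\0&0&1\end{bmatrix},\quad R_2=\frac12\begin{bmatrix}1&-\sigma&-\tau\\-\sigma&\tau&1\\-\tau&1&\sigma\end{bmatrix},\quad R_3=\begin{bmatrix}1&0&0\\0&1&0\\0&0&-1\end{bmatrix}.$$ Let $m_1,m_2\in\mathbb{Z}$ with $m_1+m_2$ even and $(m_1,m_2)\neq(0,0)$, and put $c=\sqrt{\tfrac{2}{2+\tau}}\,(m_1-m_2+2m_2\tau)$. Then each of the following seven vectors $\lambda$ lies in $D_6$, its projection $\pi_\parallel(\lambda)$ equals the stated vector of $\mathbb{R}^3$, and the $H_3$-orbit of $\pi_\parallel(\lambda)$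 is the vertex set of the stated polyhedron: (1) $\lambda=m_1l_1+m_2(l_2+l_3+l_4+l_5-l_6)$; $\pi_\parallel(\lambda)=\frac c2(1,\tau,0)$; regular icosahedron. (2) $\lambda=\frac12[(m_1+3m_2)(l_1+l_2+l_3)+(m_1-m_2)(l_4+l_5+l_6)]$; $\pi_\parallel(\lambda)=\frac c2(0,\tau^2,1)$; regular dodecahedron. (3) $\lambda=(m_1+m_2)(l_1+l_2)+2m_2(l_3+l_4)$; $\pi_\parallel(\lambda)=c(0,\tau,0)$; icosidodecahedron. (4) $\lambda=(2m_1+m_2)l_1+(m_1+2m_2)l_2+m_2(3l_3+3l_4+l_5-l_6)$; $\pi_\parallel(\lambda)=\frac c2(1,3\tau,0)$; truncated icosahedron. (5) $\lambda=\frac12[3(m_1+m_2)l_1+(m_1+5m_2)(l_2+l_3)+(m_1+m_2)(l_4+l_5)+(m_1-3m_2)l_6]$; $\pi_\parallel(\lambda)=\frac c2(1,2\tau+1,1)$; small rhombicosidodecahedron. (6) $\lambda=\frac12[(3m_1+5m_2)(l_1+l_2)+(m_1+7m_2)l_3+(m_1+3m_2)l_4+(m_1-m_2)(l_5+l_6)]$; $\pi_\parallel(\lambda)=\frac c2(0,3\tau+1,1)$; truncated dodecahedron. (7) $\lambda=\frac12[5(m_1+m_2)l_1+(3m_1+7m_2)l_2+(m_1+9m_2)l_3+(m_1+5m_2)l_4+(m_1+m_2)l_5+(m_1-3m_2)l_6]$; $\pi_\parallel(\lambda)=\frac c2(1,4\tau+1,1)$; great rhombicosidodecahedron.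
   Context: $D_6$ is the root lattice of type $D_6$, written in the orthonormal basis $l_i$. The map $\pi_\parallel$ is the projection onto one of two complementary 3-dimensional subspaces invariant under an icosahedral subgroup of the point group of $D_6$; $H_3$ is the icosahedral reflection group (of order 120) acting on that subspace. The weights of $D_6$ are $\omega_1=l_1$, $\omega_2=l_1+l_2$, $\omega_3=l_1+l_2+l_3$, $\omega_4=l_1+l_2+l_3+l_4$, $\omega_5=\frac12(l_1+\dots+l_5-l_6)$, $\omega_6=\frac12(l_1+\dots+l_6)$; in these terms the seven vectors are respectively $(m_1-m_2)\omega_1+2m_2\omega_5$, $(m_1-m_2)\omega_6+2m_2\omega_3$, $(m_1-m_2)\omega_2+2m_2\omega_4$, $(m_1-m_2)(\omega_1+\omega_2)+2m_2(\omega_4+\omega_5)$, $(m_1-m_2)(\omega_1+\omega_6)+2m_2(\omega_3+\omega_5)$, $(m_1-m_2)(\omega_2+\omega_6)+2m_2(\omega_3+\omega_4)$, $(m_1-m_2)(\omega_1+\omega_2+\omega_6)+2m_2(\omega_3+\omega_4+\omega_5)$. *)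

From mathcomp Require Import all_boot all_order all_algebra.
From mathcomp Require Import reals.
Set Implicit Arguments. Unset Strict Implicit. Unset Printing Implicit Defensive.
Import Order.TTheory GRing.Theory Num.Theory.
Local Open Scope ring_scope.

Section Defs.
Variable R : realType.

Definition tau : R := (1 + Num.sqrt 5) / 2.
Definition sigma : R := (1 - Num.sqrt 5) / 2.

Definition vec3 (a b c : R) : 'cV[R]_3 := \col_(i < 3) nth 0 [:: a; b; c] i.
Definition vec6 (a b c d e f : R) : 'cV[R]_6 :=
  \col_(i < 6) nth 0 [:: a; b; c; d; e; f] i.

Definition inD6 (x : 'cV[R]_6) : Prop :=
  exists m : 'I_6 -> int, (2 %| \sum_(i < 6) m i)%Z /\ x = \col_(i < 6) (m i)%:~R.

(* projection pi_parallel : R^6 -> R^3; column j is pi_parallel(l_(j+1)) *)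
Definition spar : R := Num.sqrt (2 * (2 + tau)).
Definition pi_par_cols : seq 'cV[R]_3 :=
  [:: vec3 1 tau 0; vec3 (-1) tau 0; vec3 0 1 tau; vec3 0 1 (- tau);
      vec3 tau 0 1; vec3 (- tau) 0 1].
Definition Ppar : 'M[R]_(3, 6) :=
  \matrix_(i < 3, j < 6) ((nth 0 pi_par_cols j) i ord0 / spar).
Definition pi_par (x : 'cV[R]_6) : 'cV[R]_3 := Ppar *m x.

Definition mx3 (a b c d e f g h k : R) : 'M[R]_3 :=
  \matrix_(i < 3, j < 3) nth 0 (nth [::] [:: [:: a; b; c]; [:: d; e; f]; [:: g; h; k]] i) j.
Definition R1 : 'M[R]_3 := mx3 (-1) 0 0  0 1 0  0 0 1.
Definition R2 : 'M[R]_3 :=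
  2^-1 *: mx3 1 (- sigma) (- tau)  (- sigma) tau 1  (- tau) 1 sigma.
Definition R3 : 'M[R]_3 := mx3 1 0 0  0 1 0  0 0 (-1).

Inductive inH3 : 'M[R]_3 -> Prop :=
  | H3_one : inH3 1%:M
  | H3_R1 : inH3 R1
  | H3_R2 : inH3 R2
  | H3_R3 : inH3 R3
  | H3_mul M N : inH3 M -> inH3 N -> inH3 (M *m N)
  | H3_inv M : inH3 M -> inH3 (invmx M).

Definition orbitH3 (v : 'cV[R]_3) (w : 'cV[R]_3) : Prop :=
  exists2 M, inH3 M & w = M *m v.

(* the set of all cyclic permutations, with all sign changes, of the given triples *)
Definition cyc_signs (gens : seq (R * R * R)) (w : 'cV[R]_3) : Prop :=
  exists g, g \in gens /\ exists (e : 'I_3 -> bool) (r : nat),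
    let u := fun i : nat => (-1) ^+ (nth false [seq e i | i <- enum 'I_3] i)
                            * nth 0 [:: g.1.1; g.1.2; g.2] i in
    w = \col_(i < 3) u ((i + r) %% 3)%N.

(* "S is the vertex set of a polyhedron similar to the model P":
   S is the image of P under a similarity x |-> k Q x + t, k > 0, Q orthogonal *)
Definition similar_to (S P : 'cV[R]_3 -> Prop) : Prop :=
  exists k : R, 0 < k /\ exists (Q : 'M[R]_3) (t : 'cV[R]_3),
    Q^T *m Q = 1%:M /\ forall w, S w <-> exists2 p, P p & w = k *: (Q *m p) + t.

(* standard Cartesian coordinates (golden ratio = tau) of the vertex sets *)
Definition icosahedron := cyc_signs [:: (0, 1, tau)].
Definition dodecahedron := cyc_signs [:: (1, 1, 1); (0, tau, tau^-1)].
Definition icosidodecahedron :=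
  cyc_signs [:: (0, 0, tau); (2^-1, tau / 2, tau ^+ 2 / 2)].
Definition truncated_icosahedron :=
  cyc_signs [:: (0, 1, 3 * tau); (1, 2 + tau, 2 * tau); (tau, 2, tau ^+ 3)].
Definition small_rhombicosidodecahedron :=
  cyc_signs [:: (1, 1, tau ^+ 3); (tau ^+ 2, tau, 2 * tau); (2 + tau, 0, tau ^+ 2)].
Definition truncated_dodecahedron :=
  cyc_signs [:: (0, tau^-1, 2 + tau); (tau^-1, tau, 2 * tau); (tau, 2, tau + 1)].
Definition great_rhombicosidodecahedron :=
  cyc_signs [:: (tau^-1, tau^-1, 3 + tau); (2 / tau, tau, 1 + 2 * tau);
                (tau^-1, tau ^+ 2, -1 + 3 * tau); (2 * tau - 1, 2, 2 + tau);
                (tau, 3, 2 * tau)].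

Definition item_claim (lam : 'cV[R]_6) (w : 'cV[R]_3) (P : 'cV[R]_3 -> Prop) : Prop :=
  [/\ inD6 lam, pi_par lam = w & similar_to (orbitH3 (pi_par lam)) P].

End Defs.

Arguments icosahedron R : clear implicits.
Arguments dodecahedron R : clear implicits.
Arguments icosidodecahedron R : clear implicits.
Arguments truncated_icosahedron R : clear implicits.
Arguments small_rhombicosidodecahedron R : clear implicits.
Arguments truncated_dodecahedron R : clear implicits.
Arguments great_rhombicosidodecahedron R : clear implicits.

(* The parallel projections are c/2 (or c) times points with coordinates in
   Q(tau), and c = sqrt(2/(2+tau)) (m1 + m2 sqrt 5) is nonzero because sqrt 5 is
   irrational.  The generators R1, R2, R3 have entries in Q(tau) as well, so
   H3-orbits can be computed exactly, representing Q(tau) as Q x Q.  A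
   breadth-first search from a point yields a finite set that is reached by words
   in the generators and is closed under them, hence under H3 since they are
   involutions.  Comparing it with the standard coordinates of the polyhedron
   (cyclic permutations with all sign changes), up to a factor in Q(tau) and
   possibly the exchange of the last two coordinates, is a finite computation. *)

From Pilot Require Import Defs.
From mathcomp Require Import all_boot all_order all_algebra.
From mathcomp Require Import reals.
From mathcomp Require Import ring lra zify.
Set Implicit Arguments. Unset Strict Implicit. Unset Printing Implicit Defensive.
Import Order.TTheory GRing.Theory Num.Theory.
Local Open Scope ring_scope.

(* [(x, y) : gold] stands for x + y tau; [gmul] uses tau^2 = tau + 1. *)
Definition gold := (rat * rat)%type.
Definition gadd (p q : gold) : gold := (p.1 + q.1, p.2 + q.2).
Definition gopp (p : gold) : gold := (- p.1, - p.2).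
Definition gmul (p q : gold) : gold :=
  (p.1 * q.1 + p.2 * q.2, p.1 * q.2 + p.2 * q.1 + p.2 * q.2).

Definition gvec := (gold * gold * gold)%type.
Definition gref1 (v : gvec) : gvec := (gopp v.1.1, v.1.2, v.2).
Definition gref3 (v : gvec) : gvec := (v.1.1, v.1.2, gopp v.2).
(* [R2], with sigma = 1 - tau. *)
Definition gref2 (v : gvec) : gvec :=
  let: (x, y, z) := v in
  let half p := gmul (1 / 2, 0) p in
  (half (gadd x (gadd (gmul (-1, 1) y) (gmul (0, -1) z))),
   half (gadd (gmul (-1, 1) x) (gadd (gmul (0, 1) y) z)),
   half (gadd (gmul (0, -1) x) (gadd y (gmul (1, -1) z)))).
Definition gref (i : nat) : gvec -> gvec :=
  match i with 0 => gref1 | 1 => gref2 | _ => gref3 end.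

Section GoldenRatio.
Variable R : realType.
Local Notation tau := (tau R).

Lemma tau_gt0 : 0 < tau.
Proof. by rewrite /tau divr_gt0 //; have := sqrtr_ge0 (5 : R); lra. Qed.

Lemma tau_neq0 : tau != 0.
Proof. by rewrite gt_eqF ?tau_gt0. Qed.

Lemma tau_sqr : tau ^+ 2 = tau + 1.
Proof.
have sqrt5_sqr : Num.sqrt (5 : R) ^+ 2 = 5 by rewrite sqr_sqrtr ?ler0n.
by rewrite /tau expr_div_n sqrrD sqrt5_sqr expr1n; field.
Qed.

Lemma tau_cube : tau ^+ 3 = 2 * tau + 1.
Proof. by rewrite exprS tau_sqr mulrDr mulr1 -expr2 tau_sqr; ring. Qed.

Lemma tauV : tau^-1 = tau - 1.
Proof.
apply: (mulfI tau_neq0); rewrite mulfV ?tau_neq0 // mulrBr mulr1 -expr2 tau_sqr.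
by ring.
Qed.

Lemma sigmaE : sigma R = 1 - tau.
Proof. by rewrite /sigma /tau; field. Qed.

Lemma mulr_tau_sqr (x : R) : x * tau ^+ 2 = x * tau + x.
Proof. by rewrite tau_sqr; ring. Qed.

Lemma mulr_tau_cube (x : R) : x * tau ^+ 3 = 2 * x * tau + x.
Proof. by rewrite tau_cube; ring. Qed.

Definition gev (p : gold) : R := ratr p.1 + ratr p.2 * tau.

Lemma gevD p q : gev (gadd p q) = gev p + gev q.
Proof. by rewrite /gev /= !rmorphD /=; ring. Qed.

Lemma gevN p : gev (gopp p) = - gev p.
Proof. by rewrite /gev /= !rmorphN /=; ring. Qed.

Lemma gevM p q : gev (gmul p q) = gev p * gev q.
Proof.
rewrite /gev /= !rmorphD !rmorphM /=.
have := mulr_tau_sqr (ratr p.2 * ratr q.2); lra.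
Qed.

End GoldenRatio.

Section Coordinates.
Variable R : realType.

Lemma mx3_vec3 (a b c d e f g h k x y z : R) :
  mx3 a b c d e f g h k *m vec3 x y z =
  vec3 (a * x + b * y + c * z) (d * x + e * y + f * z) (g * x + h * y + k * z).
Proof.
apply/matrixP => i j; rewrite !mxE !big_ord_recr big_ord0 /= !mxE /= add0r.
by case: i => [[|[|[|//]]] ?].
Qed.

Lemma scale_vec3 (r x y z : R) : r *: vec3 x y z = vec3 (r * x) (r * y) (r * z).
Proof. by apply/matrixP => i j; rewrite !mxE; case: i => [[|[|[|//]]] ?]. Qed.

Lemma scale_vec6 (r x1 x2 x3 x4 x5 x6 : R) :
  r *: vec6 x1 x2 x3 x4 x5 x6 =
  vec6 (r * x1) (r * x2) (r * x3) (r * x4) (r * x5) (r * x6).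
Proof. by apply/matrixP => i j; rewrite !mxE; case: i => [[|[|[|[|[|[|//]]]]]] ?]. Qed.

Local Notation gev := (@gev R).

Definition gvec_ev (v : gvec) : 'cV[R]_3 := vec3 (gev v.1.1) (gev v.1.2) (gev v.2).

Definition Rgen (i : nat) : 'M[R]_3 :=
  match i with 0 => R1 R | 1 => R2 R | _ => R3 R end.

Lemma Rgen_gvec_ev i v : Rgen i *m gvec_ev v = gvec_ev (gref i v).
Proof.
case: v => [[x y] z]; rewrite /gvec_ev.
case: i => [|[|i]] /=; rewrite ?/R1 ?/R2 ?/R3 -?scalemxAl mx3_vec3 ?scale_vec3;
  rewrite ?sigmaE; congr vec3; rewrite ?(gevM, gevD, gevN) /gev /=;
  rewrite ?(rmorph0, rmorph1, rmorphN, fmorph_div, rmorph_nat); ring.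
Qed.

Definition gbasis (j : nat) : gvec :=
  match j with 0 => ((1, 0), (0, 0), (0, 0)) | 1 => ((0, 0), (1, 0), (0, 0))
             | _ => ((0, 0), (0, 0), (1, 0)) end.

Lemma gvec_ev_basis (j : 'I_3) : gvec_ev (gbasis j) = delta_mx j 0.
Proof.
apply/matrixP => r k; rewrite !mxE /= !ord1 eqxx andbT.
by case: j => [[|[|[|//]]] ?]; case: r => [[|[|[|//]]] ?];
  rewrite /gev /= ?(rmorph0, rmorph1) ?mul0r ?addr0.
Qed.

(* Checked on the basis vectors, by computation in Q(tau). *)
Lemma Rgen_invol i : Rgen i *m Rgen i = 1%:M.
Proof.
have gref_invol (j : 'I_3) : gref i (gref i (gbasis j)) = gbasis j.
  by apply/eqP; case: i => [|[|i]]; case: j => [[|[|[|//]]] ?]; vm_compute.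
apply/matrixP => r j.
have : col j (Rgen i *m Rgen i) = col j 1%:M.
  by rewrite !colE -mulmxA -gvec_ev_basis !Rgen_gvec_ev gref_invol mul1mx.
by move/matrixP/(_ r 0); rewrite !mxE.
Qed.

End Coordinates.

Definition gword (ws : seq nat) (v : gvec) : gvec := foldr gref v ws.

Definition orbit_next (seen frontier : seq gvec) : seq gvec :=
  undup [seq u <- [seq gref i w | i <- iota 0 3, w <- frontier] | u \notin seen].

Fixpoint orbit_bfs (n : nat) (seen frontier : seq gvec) : seq gvec :=
  if n is n'.+1 then
    let next := orbit_next seen frontier in orbit_bfs n' (seen ++ next) next
  else seen.

(* 15 is the length of the longest element of the Coxeter group H3. *)
Definition gorbit (v : gvec) : seq gvec := orbit_bfs 15 [:: v] [:: v].

Definition gclosed (L : seq gvec) : bool :=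
  all (fun u => all (fun i => gref i u \in L) (iota 0 3)) L.

Lemma mem_gorbit v : v \in gorbit v.
Proof.
suff bfs_keeps n seen fr : v \in seen -> v \in orbit_bfs n seen fr by apply/bfs_keeps/mem_head.
elim: n seen fr => [|n IH] seen fr //= v_seen.
by apply: IH; rewrite mem_cat v_seen.
Qed.

Lemma gorbit_word v u : u \in gorbit v -> exists ws, u = gword ws v.
Proof.
pose reached (L : seq gvec) := forall u, u \in L -> exists ws, u = gword ws v.
suff bfs_reached n seen fr : reached seen -> reached fr -> reached (orbit_bfs n seen fr).
  by apply: bfs_reached => w; rewrite inE => /eqP ->; exists [::].
elim: n seen fr => [|n IH] seen fr //= seen_ok fr_ok.
have next_ok : reached (orbit_next seen fr).
  move=> w; rewrite mem_undup mem_filter => /andP [_ /allpairsP [[i x] [_ /fr_ok [ws ->] ->]]].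
  by exists (i :: ws).
by apply: IH => // w; rewrite mem_cat => /orP [/seen_ok | /next_ok].
Qed.

Section Orbit.
Variable R : realType.
Local Notation gvec_ev := (@gvec_ev R).

Definition Rword (ws : seq nat) : 'M[R]_3 := foldr (fun i M => Rgen R i *m M) 1%:M ws.

Lemma Rword_gvec_ev ws v : Rword ws *m gvec_ev v = gvec_ev (gword ws v).
Proof.
elim: ws => [|i ws IH] /=; first by rewrite mul1mx.
by rewrite -mulmxA IH Rgen_gvec_ev.
Qed.

Lemma inH3_Rgen i : inH3 (Rgen R i).
Proof. by case: i => [|[|i]]; constructor. Qed.

Lemma inH3_Rword ws : inH3 (Rword ws).
Proof. by elim: ws => [|i ws IH]; [exact: H3_one | exact: H3_mul (inH3_Rgen i) IH]. Qed.

Lemma Rgen_unit i : Rgen R i \in unitmx.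
Proof. exact: (mulmx1_unit (Rgen_invol R i)).1. Qed.

Variable L : seq gvec.
Hypothesis L_closed : gclosed L.

Definition Lpoints (x : 'cV[R]_3) : Prop := exists2 u, u \in L & x = gvec_ev u.

Lemma Rgen_Lpoints i x : Lpoints x <-> Lpoints (Rgen R i *m x).
Proof.
have gref_in u : u \in L -> gref i u \in L.
  (* [gref i] only depends on [minn i 2]. *)
  move=> uL; move/allP/(_ u uL)/allP: L_closed => /(_ (minn i 2)).
  by rewrite mem_iota; case: i => [|[|i]] /=; apply.
split=> [[u uL ->] | [u uL xE]]; exists (gref i u); rewrite ?gref_in //.
  by rewrite Rgen_gvec_ev.
by rewrite -Rgen_gvec_ev -xE mulmxA Rgen_invol mul1mx.
Qed.

(* The invariance is strengthened to an equivalence so that it passes to inverses. *)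
Lemma inH3_Lpoints M : inH3 M -> M \in unitmx /\ forall x, Lpoints x <-> Lpoints (M *m x).
Proof.
elim=> {M} [| | | | M N _ [uM hM] _ [uN hN] | M _ [uM hM]].
- by split=> [|x]; rewrite ?unitmx1 ?mul1mx.
- by split=> [|x]; [exact: (Rgen_unit 0) | exact: (Rgen_Lpoints 0)].
- by split=> [|x]; [exact: (Rgen_unit 1) | exact: (Rgen_Lpoints 1)].
- by split=> [|x]; [exact: (Rgen_unit 2) | exact: (Rgen_Lpoints 2)].
- by split=> [|x]; rewrite ?unitmx_mul ?uM ?uN // hN hM mulmxA.
- by split=> [|x]; rewrite ?unitmx_inv // (hM (invmx M *m x)) mulKVmx.
Qed.

End Orbit.

Lemma orbitH3_gorbit (R : realType) (v : gvec) (s : R) w : gclosed (gorbit v) ->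
  orbitH3 (s *: gvec_ev R v) w <-> exists2 u, u \in gorbit v & w = s *: gvec_ev R u.
Proof.
move=> closed_orbit; split.
- case=> M /(inH3_Lpoints closed_orbit) [_ /(_ (gvec_ev R v)) M_stable] ->.
  have [|u uL uE] := M_stable.1; first by exists v; rewrite ?mem_gorbit.
  by exists u; rewrite // -scalemxAr uE.
- case=> u /gorbit_word [ws ->] ->; exists (Rword R ws); first exact: inH3_Rword.
  by rewrite -scalemxAr Rword_gvec_ev.
Qed.

Definition gsign (e : bool) (x : gold) : gold := if e then gopp x else x.

Definition gsigncyc (q : gvec) (p : bool * bool * bool * nat) : gvec :=
  let: (e0, e1, e2, r) := p in
  let u k := gsign (nth false [:: e0; e1; e2] k) (nth (0, 0) [:: q.1.1; q.1.2; q.2] k) in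
  (u ((0 + r) %% 3)%N, u ((1 + r) %% 3)%N, u ((2 + r) %% 3)%N).

Definition sign_cycles : seq (bool * bool * bool * nat) :=
  let bs := [:: true; false] in
  [seq (p, r) | p <- [seq (p, e) | p <- [seq (e0, e1) | e0 <- bs, e1 <- bs], e <- bs],
                r <- iota 0 3].

Lemma mem_sign_cycles e0 e1 e2 r : (r < 3)%N -> (e0, e1, e2, r) \in sign_cycles.
Proof. by case: e0; case: e1; case: e2; case: r => [|[|[|]]]. Qed.

Definition gmodel (gens : seq gvec) : seq gvec :=
  [seq gsigncyc q p | q <- gens, p <- sign_cycles].

Lemma map_enum_ord3 (T : Type) (e : 'I_3 -> T) :
  [seq e i | i <- enum 'I_3] = [:: e 0; e 1; e 2].
Proof.
have -> : enum 'I_3 = [:: 0; 1; 2] by apply: (inj_map val_inj); rewrite val_enum_ord.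
by [].
Qed.

Section Model.
Variable R : realType.
Local Notation gev := (@gev R).
Local Notation gvec_ev := (@gvec_ev R).

Definition gtriple (q : gvec) : R * R * R := (gev q.1.1, gev q.1.2, gev q.2).

Lemma gev_sign e x : gev (gsign e x) = (-1) ^+ e * gev x.
Proof. by case: e; rewrite /= ?gevN ?expr1 ?expr0 ?mulN1r ?mul1r. Qed.

Lemma col_gsigncyc (e : 'I_3 -> bool) (q : gvec) (r : nat) :
  \col_(i < 3) ((-1) ^+ (nth false [seq e i | i <- enum 'I_3] ((i + r) %% 3)%N)
                * nth 0 [:: (gtriple q).1.1; (gtriple q).1.2; (gtriple q).2] ((i + r) %% 3)%N)
  = gvec_ev (gsigncyc q (e 0, e 1, e 2, r)).
Proof.
apply/matrixP => i j; rewrite !mxE map_enum_ord3.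
have gev_nth k : (-1) ^+ (nth false [:: e 0; e 1; e 2] k)
    * nth 0 [:: (gtriple q).1.1; (gtriple q).1.2; (gtriple q).2] k
  = gev (gsign (nth false [:: e 0; e 1; e 2] k) (nth (0, 0) [:: q.1.1; q.1.2; q.2] k)).
  rewrite gev_sign; case: k => [|[|[|k]]] //=.
  by rewrite !nth_nil /gev /= rmorph0 mul0r addr0.
by rewrite gev_nth; case: i => [[|[|[|//]]] ?].
Qed.

Lemma cyc_signs_gmodel gens w :
  cyc_signs (map gtriple gens) w <-> exists2 q, q \in gmodel gens & w = gvec_ev q.
Proof.
split.
- case=> _ [/mapP [q q_gen ->]] [e [r ->]].
  exists (gsigncyc q (e 0, e 1, e 2, (r %% 3)%N)).
    by apply: allpairs_f; rewrite ?mem_sign_cycles ?ltn_pmod.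
  by rewrite -col_gsigncyc; apply/matrixP => i j; rewrite !mxE /= modnDmr.
- case=> _ /allpairsP [[q [[[e0 e1] e2] r]] [q_gen _ ->]] ->.
  exists (gtriple q); split; first exact: map_f.
  exists (fun i : 'I_3 => nth false [:: e0; e1; e2] i), r.
  exact/esym/(col_gsigncyc (fun i : 'I_3 => nth false [:: e0; e1; e2] i)).
Qed.

End Model.

Definition gscale (f : gold) (sw : bool) (q : gvec) : gvec :=
  let: (x, y, z) := q in
  let: (x, y, z) := if sw then (x, z, y) else (x, y, z) in
  (gmul f x, gmul f y, gmul f z).

(* Some orbits match the model only after exchanging the last two coordinates. *)
Definition scaled_model (f : gold) (sw : bool) (gens : seq gvec) : seq gvec :=
  [seq gscale f sw q | q <- gmodel gens].

Section Similar.
Variable R : realType.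
Local Notation gev := (@gev R).
Local Notation gvec_ev := (@gvec_ev R).

(* Unqualified, [similar_to] would be MathComp's similarity of matrices. *)
Lemma similar_toZ (S P : 'cV[R]_3 -> Prop) (k : R) (Q : 'M[R]_3) :
  k != 0 -> Q^T *m Q = 1%:M -> (forall w, S w <-> exists2 p, P p & w = k *: (Q *m p)) ->
  Defs.similar_to S P.
Proof.
move=> k_neq0 Q_orth SE.
have [k' [Q' [k'_gt0 Q'_orth Q'E]]] : exists (k' : R) (Q' : 'M[R]_3),
    [/\ 0 < k', Q'^T *m Q' = 1%:M & forall p : 'cV[R]_3, k' *: (Q' *m p) = k *: (Q *m p)].
  have [k_gt0 | k_le0] := ltP 0 k; first by exists k, Q.
  exists (- k), (- Q); split; first by rewrite oppr_gt0 lt_neqAle k_neq0.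
    rewrite (_ : (- Q)^T = - Q^T) ?mulNmx ?mulmxN ?opprK //.
    by apply/matrixP => i j; rewrite !mxE.
  by move=> p; rewrite mulNmx scalerN scaleNr opprK.
exists k'; split=> //; exists Q', 0; split=> // w; rewrite SE.
by split=> -[p Pp ->]; exists p; rewrite // addr0 Q'E.
Qed.

Definition swap_mx (sw : bool) : 'M[R]_3 :=
  if sw then mx3 1 0 0 0 0 1 0 1 0 else mx3 1 0 0 0 1 0 0 0 1.

Lemma swap_mx_orth sw : (swap_mx sw)^T *m swap_mx sw = 1%:M.
Proof.
apply/matrixP => i j; rewrite !mxE !big_ord_recr big_ord0 /= !mxE /= add0r.
by case: sw; case: i => [[|[|[|//]]] ?]; case: j => [[|[|[|//]]] ?]; rewrite !mxE /=; ring.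
Qed.

Lemma gvec_ev_gscale f sw q : gvec_ev (gscale f sw q) = gev f *: (swap_mx sw *m gvec_ev q).
Proof.
case: q => [[x y] z]; rewrite /gvec_ev.
case: sw; rewrite /swap_mx mx3_vec3 scale_vec3; cbn [gscale fst snd];
  by rewrite !gevM; congr vec3; ring.
Qed.

Lemma similar_orbitH3 (x : 'cV[R]_3) (P : 'cV[R]_3 -> Prop) v gens f sw (s : R) :
  s != 0 -> x = gvec_ev v -> P = cyc_signs (map (@gtriple R) gens) -> gev f != 0 ->
  gclosed (gorbit v) -> all (mem (scaled_model f sw gens)) (gorbit v) ->
  all (mem (gorbit v)) (scaled_model f sw gens) ->
  Defs.similar_to (orbitH3 (s *: x)) P.
Proof.
move=> s_neq0 -> -> f_neq0 closed_orbit /allP orbit_sub /allP model_sub.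
apply: (similar_toZ (k := s * gev f) (Q := swap_mx sw)).
- by rewrite mulf_neq0.
- exact: swap_mx_orth.
move=> w; rewrite (orbitH3_gorbit _ _ closed_orbit); split.
- case=> u /orbit_sub /mapP [q q_model ->] ->.
  exists (gvec_ev q); first by apply/cyc_signs_gmodel; exists q.
  by rewrite gvec_ev_gscale scalerA.
- case=> _ /cyc_signs_gmodel [q q_model ->] ->.
  exists (gscale f sw q); first exact/model_sub/map_f.
  by rewrite gvec_ev_gscale scalerA.
Qed.

End Similar.

Section Polyhedra.
Variable R : realType.
Local Notation tau := (tau R).
Local Notation gev := (@gev R).
Local Notation gvec_ev := (@gvec_ev R).

Ltac gev_eq := rewrite /gev /=
  ?(rmorph0, rmorph1, rmorphN, rmorph_nat, fmorphV, fmorph_div)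
  ?tauV ?tau_cube ?tau_sqr; ring.

Ltac gtriples_eq := rewrite /=; repeat (congr (_ :: _); first by congr (_, _, _); gev_eq).

Lemma gev_tau_neq0 : gev (0, 1) != 0.
Proof. by rewrite /gev /= rmorph0 rmorph1 add0r mul1r tau_neq0. Qed.

Lemma gev_one_neq0 : gev (1, 0) != 0.
Proof. by rewrite /gev /= rmorph0 rmorph1 mul0r addr0 oner_neq0. Qed.

Lemma orbit_icosahedron (s : R) : s != 0 ->
  Defs.similar_to (orbitH3 (s *: vec3 1 tau 0)) (icosahedron R).
Proof.
move=> s_neq0.
apply: (similar_orbitH3 (v := ((1, 0), (0, 1), (0, 0))) (f := (1, 0)) (sw := false)
          (gens := [:: ((0, 0), (1, 0), (0, 1))]) s_neq0).
- by congr vec3; gev_eq.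
- by rewrite /icosahedron; congr cyc_signs; gtriples_eq.
- exact: gev_one_neq0.
all: by vm_compute.
Qed.

Lemma orbit_dodecahedron (s : R) : s != 0 ->
  Defs.similar_to (orbitH3 (s *: vec3 0 (tau ^+ 2) 1)) (dodecahedron R).
Proof.
move=> s_neq0.
apply: (similar_orbitH3 (v := ((0, 0), (1, 1), (1, 0))) (f := (0, 1)) (sw := false)
          (gens := [:: ((1, 0), (1, 0), (1, 0)); ((0, 0), (0, 1), (-1, 1))]) s_neq0).
- by congr vec3; gev_eq.
- by rewrite /dodecahedron; congr cyc_signs; gtriples_eq.
- exact: gev_tau_neq0.
all: by vm_compute.
Qed.

Lemma orbit_icosidodecahedron (s : R) : s != 0 ->
  Defs.similar_to (orbitH3 (s *: vec3 0 tau 0)) (icosidodecahedron R).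
Proof.
move=> s_neq0.
apply: (similar_orbitH3 (v := ((0, 0), (0, 1), (0, 0))) (f := (1, 0)) (sw := true)
          (gens := [:: ((0, 0), (0, 0), (0, 1));
                       ((1 / 2, 0), (0, 1 / 2), (1 / 2, 1 / 2))]) s_neq0).
- by congr vec3; gev_eq.
- by rewrite /icosidodecahedron; congr cyc_signs; gtriples_eq.
- exact: gev_one_neq0.
all: by vm_compute.
Qed.

Lemma orbit_truncated_icosahedron (s : R) : s != 0 ->
  Defs.similar_to (orbitH3 (s *: vec3 1 (3 * tau) 0)) (truncated_icosahedron R).
Proof.
move=> s_neq0.
apply: (similar_orbitH3 (v := ((1, 0), (0, 3), (0, 0))) (f := (1, 0)) (sw := false)
          (gens := [:: ((0, 0), (1, 0), (0, 3)); ((1, 0), (2, 1), (0, 2));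
                ((0, 1), (2, 0), (1, 2))]) s_neq0).
- by congr vec3; gev_eq.
- by rewrite /truncated_icosahedron; congr cyc_signs; gtriples_eq.
- exact: gev_one_neq0.
all: by vm_compute.
Qed.

Lemma orbit_small_rhombicosidodecahedron (s : R) : s != 0 ->
  Defs.similar_to (orbitH3 (s *: vec3 1 (2 * tau + 1) 1)) (small_rhombicosidodecahedron R).
Proof.
move=> s_neq0.
apply: (similar_orbitH3 (v := ((1, 0), (1, 2), (1, 0))) (f := (1, 0)) (sw := true)
          (gens := [:: ((1, 0), (1, 0), (1, 2)); ((1, 1), (0, 1), (0, 2));
                ((2, 1), (0, 0), (1, 1))]) s_neq0).
- by congr vec3; gev_eq.
- by rewrite /small_rhombicosidodecahedron; congr cyc_signs; gtriples_eq.
- exact: gev_one_neq0.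
all: by vm_compute.
Qed.

Lemma orbit_truncated_dodecahedron (s : R) : s != 0 ->
  Defs.similar_to (orbitH3 (s *: vec3 0 (3 * tau + 1) 1)) (truncated_dodecahedron R).
Proof.
move=> s_neq0.
apply: (similar_orbitH3 (v := ((0, 0), (1, 3), (1, 0))) (f := (0, 1)) (sw := true)
          (gens := [:: ((0, 0), (-1, 1), (2, 1)); ((-1, 1), (0, 1), (0, 2));
                ((0, 1), (2, 0), (1, 1))]) s_neq0).
- by congr vec3; gev_eq.
- by rewrite /truncated_dodecahedron; congr cyc_signs; gtriples_eq.
- exact: gev_tau_neq0.
all: by vm_compute.
Qed.

Lemma orbit_great_rhombicosidodecahedron (s : R) : s != 0 ->
  Defs.similar_to (orbitH3 (s *: vec3 1 (4 * tau + 1) 1)) (great_rhombicosidodecahedron R).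
Proof.
move=> s_neq0.
apply: (similar_orbitH3 (v := ((1, 0), (1, 4), (1, 0))) (f := (0, 1)) (sw := true)
          (gens := [:: ((-1, 1), (-1, 1), (3, 1)); ((-2, 2), (0, 1), (1, 2));
                ((-1, 1), (1, 1), (-1, 3)); ((-1, 2), (2, 0), (2, 1));
                ((0, 1), (3, 0), (0, 2))]) s_neq0).
- by congr vec3; gev_eq.
- by rewrite /great_rhombicosidodecahedron; congr cyc_signs; gtriples_eq.
- exact: gev_tau_neq0.
all: by vm_compute.
Qed.

End Polyhedra.

Section Projection.
Variable R : realType.
Local Notation tau := (tau R).

Lemma pi_par_vec6 (x1 x2 x3 x4 x5 x6 : R) :
  pi_par (vec6 x1 x2 x3 x4 x5 x6) = (spar R)^-1 *:
    vec3 (x1 - x2 + tau * x5 - tau * x6) (tau * x1 + tau * x2 + x3 + x4)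
         (tau * x3 - tau * x4 + x5 + x6).
Proof.
apply/matrixP => i j; rewrite !mxE !big_ord_recr big_ord0 /= !mxE /= add0r.
by case: i => [[|[|[|//]]] ?]; rewrite /= ?mxE /=; ring.
Qed.

Lemma spar_gt0 : 0 < spar R.
Proof. by rewrite sqrtr_gt0 mulr_gt0 //; have := tau_gt0 R; lra. Qed.

Lemma spar_neq0 : spar R != 0.
Proof. by rewrite gt_eqF ?spar_gt0. Qed.

Lemma sqrt_ratio_spar : Num.sqrt (2 / (2 + tau)) = 2 / spar R.
Proof.
have tau2_gt0 : 0 < 2 + tau by have := tau_gt0 R; lra.
apply: (mulIf spar_neq0); rewrite mulfVK ?spar_neq0 // -sqrtrM ?divr_ge0 ?ltW //.
have -> : 2 / (2 + tau) * (2 * (2 + tau)) = 2 ^+ 2 by field; rewrite gt_eqF.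
by rewrite sqrtr_sqr gtr0_norm.
Qed.

Lemma inD6_vec6 (z1 z2 z3 z4 z5 z6 : int) (x : 'cV[R]_6) :
  (2 %| z1 + z2 + z3 + z4 + z5 + z6)%Z ->
  x = vec6 z1%:~R z2%:~R z3%:~R z4%:~R z5%:~R z6%:~R -> inD6 x.
Proof.
move=> even_sum ->; exists (fun i => nth 0 [:: z1; z2; z3; z4; z5; z6] i); split.
  by rewrite !big_ord_recr big_ord0 /= add0r.
by apply/matrixP => i j; rewrite !mxE; case: i => [[|[|[|[|[|[|//]]]]]] ?].
Qed.

Lemma item_claim_intro (lam : 'cV[R]_6) (w : 'cV[R]_3) (P : 'cV[R]_3 -> Prop) :
  inD6 lam -> pi_par lam = w -> Defs.similar_to (orbitH3 w) P -> item_claim lam w P.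
Proof. by move=> lam_D6 pi_lam; split; rewrite ?pi_lam. Qed.

Lemma sqrt5_irrational (p q : int) :
  (p, q) <> (0, 0) -> p%:~R + q%:~R * Num.sqrt 5 != 0 :> R.
Proof.
move=> pq_neq0; apply/negP => /eqP pq_root.
have [q0 | q_neq0] := eqVneq q 0.
  apply: pq_neq0; move: pq_root; rewrite q0 mul0r addr0 => /eqP.
  by rewrite intr_eq0 => /eqP ->.
have pq_sq : p ^+ 2 = 5 * q ^+ 2.
  apply: (@intr_inj R); have p_eq : (p%:~R : R) = - (q%:~R * Num.sqrt 5).
    by apply/eqP; rewrite -subr_eq0 opprK pq_root.
  by rewrite rmorphXn rmorphM rmorphXn /= p_eq sqrrN exprMn sqr_sqrtr ?ler0n // mulrC.
move/(congr1 absz): pq_sq; rewrite abszM !abszX /= => pq_sq.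
have q_gt0 : (0 < `|q|)%N by rewrite absz_gt0.
(* The 5-adic valuation of the left side is even, that of the right side odd. *)
move/(congr1 (logn 5)): pq_sq.
rewrite lognM ?expn_gt0 ?q_gt0 // !lognX [logn 5 5]logn_prime //=.
by move=> /(congr1 odd); rewrite oddD !oddM.
Qed.

End Projection.

Arguments inD6_vec6 {R} z1 z2 z3 z4 z5 z6 {x}.

Section Items.
Variables (R : realType) (m1 m2 : int).
Hypothesis m12_even : (2 %| m1 + m2)%Z.
Hypothesis m12_neq0 : (m1, m2) <> (0, 0).
Local Notation a := (m1%:~R : R).
Local Notation b := (m2%:~R : R).
Local Notation t := (tau R).
Local Notation K := (a - b + 2 * b * t).
Local Notation c := (Num.sqrt (2 / (2 + t)) * K).

Lemma half_c : c / 2 = (spar R)^-1 * K.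
Proof. by rewrite sqrt_ratio_spar; field; rewrite spar_neq0. Qed.

Lemma c_spar : c = (spar R)^-1 * (2 * K).
Proof. by rewrite sqrt_ratio_spar; field; rewrite spar_neq0. Qed.

Lemma c_neq0 : c != 0.
Proof.
rewrite c_spar !mulf_neq0 ?invr_eq0 ?spar_neq0 ?pnatr_eq0 //.
have -> : K = a + b * Num.sqrt 5 by rewrite /tau; field.
exact: sqrt5_irrational.
Qed.

Lemma half_c_neq0 : c / 2 != 0.
Proof. by rewrite mulf_neq0 ?c_neq0 ?invr_eq0 ?pnatr_eq0. Qed.

Lemma m1_half : exists n : int, m1 = n + n - m2.
Proof. by case/dvdzP: m12_even => n mE; exists n; lia. Qed.

Ltac vec6_int_eq := rewrite ?scale_vec6; congr vec6;
  rewrite ?(rmorph0, rmorphD, rmorphB, rmorphN, rmorphM, rmorph_nat); lra.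
Ltac pi_par_eq := rewrite ?scale_vec6 pi_par_vec6 ?half_c ?c_spar -scalerA;
  congr (_ *: _); rewrite scale_vec3; congr vec3;
  move: (mulr_tau_sqr a) (mulr_tau_sqr b) (mulr_tau_cube b); lra.

Lemma item_icosahedron :
  item_claim (vec6 a b b b b (- b)) ((c / 2) *: vec3 1 t 0) (icosahedron R).
Proof.
apply: item_claim_intro.
- by apply: (inD6_vec6 m1 m2 m2 m2 m2 (- m2));
    [lia | vec6_int_eq].
- by pi_par_eq.
- exact: orbit_icosahedron half_c_neq0.
Qed.

Lemma item_dodecahedron :
  item_claim ((2:R)^-1 *: vec6 (a + 3 * b) (a + 3 * b) (a + 3 * b) (a - b) (a - b) (a - b))
             ((c / 2) *: vec3 0 (t ^+ 2) 1) (dodecahedron R).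
Proof.
apply: item_claim_intro.
- have [n ->] := m1_half.
  by apply: (inD6_vec6 (n + m2) (n + m2) (n + m2) (n - m2) (n - m2) (n - m2));
    [lia | vec6_int_eq].
- by pi_par_eq.
- exact: orbit_dodecahedron half_c_neq0.
Qed.

Lemma item_icosidodecahedron :
  item_claim (vec6 (a + b) (a + b) (2 * b) (2 * b) 0 0)
             (c *: vec3 0 t 0) (icosidodecahedron R).
Proof.
apply: item_claim_intro.
- by apply: (inD6_vec6 (m1 + m2) (m1 + m2) (2 * m2) (2 * m2) 0 0);
    [lia | vec6_int_eq].
- by pi_par_eq.
- exact: orbit_icosidodecahedron c_neq0.
Qed.

Lemma item_truncated_icosahedron :
  item_claim (vec6 (2 * a + b) (a + 2 * b) (3 * b) (3 * b) b (- b))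
             ((c / 2) *: vec3 1 (3 * t) 0) (truncated_icosahedron R).
Proof.
apply: item_claim_intro.
- by apply: (inD6_vec6 (2 * m1 + m2) (m1 + 2 * m2) (3 * m2) (3 * m2) m2 (- m2));
    [lia | vec6_int_eq].
- by pi_par_eq.
- exact: orbit_truncated_icosahedron half_c_neq0.
Qed.

Lemma item_small_rhombicosidodecahedron :
  item_claim ((2:R)^-1 *: vec6 (3 * (a + b)) (a + 5 * b) (a + 5 * b)
                              (a + b) (a + b) (a - 3 * b))
             ((c / 2) *: vec3 1 (2 * t + 1) 1) (small_rhombicosidodecahedron R).
Proof.
apply: item_claim_intro.
- have [n ->] := m1_half.
  by apply: (inD6_vec6 (3 * n) (n + 2 * m2) (n + 2 * m2) n n (n - 2 * m2));
    [lia | vec6_int_eq].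
- by pi_par_eq.
- exact: orbit_small_rhombicosidodecahedron half_c_neq0.
Qed.

Lemma item_truncated_dodecahedron :
  item_claim ((2:R)^-1 *: vec6 (3 * a + 5 * b) (3 * a + 5 * b) (a + 7 * b)
                              (a + 3 * b) (a - b) (a - b))
             ((c / 2) *: vec3 0 (3 * t + 1) 1) (truncated_dodecahedron R).
Proof.
apply: item_claim_intro.
- have [n ->] := m1_half.
  by apply: (inD6_vec6 (3 * n + m2) (3 * n + m2) (n + 3 * m2) (n + m2) (n - m2) (n - m2));
    [lia | vec6_int_eq].
- by pi_par_eq.
- exact: orbit_truncated_dodecahedron half_c_neq0.
Qed.

Lemma item_great_rhombicosidodecahedron :
  item_claim ((2:R)^-1 *: vec6 (5 * (a + b)) (3 * a + 7 * b) (a + 9 * b)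
                              (a + 5 * b) (a + b) (a - 3 * b))
             ((c / 2) *: vec3 1 (4 * t + 1) 1) (great_rhombicosidodecahedron R).
Proof.
apply: item_claim_intro.
- have [n ->] := m1_half.
  by apply: (inD6_vec6 (5 * n) (3 * n + 2 * m2) (n + 4 * m2) (n + 2 * m2) n (n - 2 * m2));
    [lia | vec6_int_eq].
- by pi_par_eq.
- exact: orbit_great_rhombicosidodecahedron half_c_neq0.
Qed.

End Items.

Theorem mainTheorem1 (R : realType) (m1 m2 : int) :
  (2 %| m1 + m2)%Z -> (m1, m2) <> (0, 0) ->
  let a : R := m1%:~R in
  let b : R := m2%:~R in
  let t : R := tau R in
  let c : R := Num.sqrt (2 / (2 + t)) * (a - b + 2 * b * t) in
  item_claim (vec6 a b b b b (- b)) ((c / 2) *: vec3 1 t 0) (icosahedron R) /\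
      item_claim ((2:R)^-1 *: vec6 (a + 3 * b) (a + 3 * b) (a + 3 * b)
                                   (a - b) (a - b) (a - b))
                 ((c / 2) *: vec3 0 (t ^+ 2) 1) (dodecahedron R) /\
      item_claim (vec6 (a + b) (a + b) (2 * b) (2 * b) 0 0)
                 (c *: vec3 0 t 0) (icosidodecahedron R) /\
      item_claim (vec6 (2 * a + b) (a + 2 * b) (3 * b) (3 * b) b (- b))
                 ((c / 2) *: vec3 1 (3 * t) 0) (truncated_icosahedron R) /\
      item_claim ((2:R)^-1 *: vec6 (3 * (a + b)) (a + 5 * b) (a + 5 * b)
                                   (a + b) (a + b) (a - 3 * b))
                 ((c / 2) *: vec3 1 (2 * t + 1) 1) (small_rhombicosidodecahedron R) /\
      item_claim ((2:R)^-1 *: vec6 (3 * a + 5 * b) (3 * a + 5 * b) (a + 7 * b)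
                                   (a + 3 * b) (a - b) (a - b))
                 ((c / 2) *: vec3 0 (3 * t + 1) 1) (truncated_dodecahedron R) /\
      item_claim ((2:R)^-1 *: vec6 (5 * (a + b)) (3 * a + 7 * b) (a + 9 * b)
                                   (a + 5 * b) (a + b) (a - 3 * b))
                 ((c / 2) *: vec3 1 (4 * t + 1) 1) (great_rhombicosidodecahedron R).
Proof.
move=> m12_even m12_neq0 a b t c.
split; first exact: item_icosahedron m12_even m12_neq0.
split; first exact: item_dodecahedron m12_even m12_neq0.
split; first exact: item_icosidodecahedron m12_even m12_neq0.
split; first exact: item_truncated_icosahedron m12_even m12_neq0.
split; first exact: item_small_rhombicosidodecahedron m12_even m12_neq0.
split; first exact: item_truncated_dodecahedron m12_even m12_neq0.
exact: item_great_rhombicosidodecahedron m12_even m12_neq0.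
Qed.
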